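(* Let $G$ be a $2$-permutable graph. Then $\chi_i(G\,\square\,K_2)=\Delta(G\,\square\,K_2)+1$.
   Context: All graphs are finite and simple. $K^-_{2n}$ is the complete graph on $2n$ vertices with a perfect matching removed. A homomorphism $f:G\to H$ is a map $V(G)\to V(H)$ with $f(u)f(v)\in E(H)$ whenever $uv\in E(G)$; it is locally injective if for every vertex $v$, $f$ is injective on $N(v)$. A connected $2d$-regular graph $G$ is $2$-permutable if it admits a locally injective homomorphism to $K^-_{2d+2}$. An incidence of $G$ is a pair $(v,e)$ with $v\in e\in E(G)$; incidences $(v,e),(u,f)$ are adjacent if $v=u$, or $e=f$, or $vu\in\{e,f\}$; an incidence coloring gives adjacent incidences distinct colors; $\chi_i(G)$ is the least number of colors of an incidence coloring. $\Delta$ denotes maximum degree. $G\,\square\,H$ is the Cartesian product: vertex set $V(G)\times V(H)$, $(u,v)\sim(u',v')$ iff ($uu'\in E(G)$, $v=v'$) or ($u=u'$, $vv'\in E(H)$). *)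

From mathcomp Require Import all_boot.
Set Implicit Arguments. Unset Strict Implicit. Unset Printing Implicit Defensive.

(* A finite simple graph is a symmetric irreflexive relation e on a finType T. *)

Definition nbhd (T : finType) (e : rel T) (v : T) : {set T} := [set w | e v w].

Definition regular (T : finType) (e : rel T) (k : nat) : Prop :=
  forall v : T, #|nbhd e v| = k.

Definition connected_graph (T : finType) (e : rel T) : Prop :=
  0 < #|T| /\ forall x y : T, connect e x y.

Definition is_hom (T U : finType) (e : rel T) (e' : rel U) (f : T -> U) : Prop :=
  forall u v, e u v -> e' (f u) (f v).

Definition locally_injective (T U : finType) (e : rel T) (f : T -> U) : Prop :=
  forall v : T, {in nbhd e v &, injective f}.

(* K^-_{2n}: complete graph on 'I_(2n) minus the perfect matching {2k, 2k+1} *)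
Definition Kminus (n : nat) : rel 'I_(2 * n) :=
  fun i j => (i != j) && (i./2 != j./2).
Arguments Kminus n : clear implicits.

Definition two_permutable (T : finType) (e : rel T) : Prop :=
  exists d : nat, regular e (2 * d) /\ connected_graph e /\
    exists f : T -> 'I_(2 * (d + 1)),
      is_hom e (Kminus (d + 1)) f /\ locally_injective e f.

Definition cartesian (T U : finType) (e1 : rel T) (e2 : rel U) : rel (T * U) :=
  fun a b => (e1 a.1 b.1 && (a.2 == b.2)) || ((a.1 == b.1) && e2 a.2 b.2).

Definition K2 : rel bool := fun a b => a != b.

Definition max_degree (T : finType) (e : rel T) : nat := \max_(v : T) #|nbhd e v|.

(* Incidences: an incidence (v, vw) is encoded as the pair (v, w) with e v w. *)
Definition is_incidence (T : finType) (e : rel T) (p : T * T) : bool := e p.1 p.2.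

Definition inc_adj (T : finType) (p q : T * T) : bool :=
  let: (v, w) := p in let: (u, x) := q in
  [|| v == u, [set v; w] == [set u; x], [set v; u] == [set v; w]
    | [set v; u] == [set u; x]].

Definition is_incidence_coloring (T : finType) (e : rel T) (k : nat)
  (c : T * T -> 'I_k) : bool :=
  [forall p : T * T, forall q : T * T,
     [&& p != q, is_incidence e p, is_incidence e q & inc_adj p q] ==>
     (c p != c q)].

Definition inc_colorable (T : finType) (e : rel T) (k : nat) : bool :=
  [exists c : {ffun T * T -> 'I_k}, is_incidence_coloring e c].

Lemma inc_colorable_ex (T : finType) (e : rel T) :
  exists k, inc_colorable e k.
Proof.
exists #|{: T * T}|; apply/existsP; exists [ffun p => enum_rank p].
apply/forallP => p; apply/forallP => q; apply/implyP => /andP [npq _].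
rewrite !ffunE; apply: contra npq => /eqP H; apply/eqP.
exact: enum_rank_inj.
Qed.

Definition inc_chi (T : finType) (e : rel T) : nat := ex_minn (inc_colorable_ex e).

From mathcomp Require Import all_boot.
From mathcomp Require Import zify.

(* The lower bound chi_i >= Delta + 1 holds in any graph with an edge: at a
   vertex z of maximum degree with a neighbour y, the incidence (y, yz)
   together with all incidences (z, zw) are pairwise adjacent.
   For the upper bound, G □ K_2 is (2d+1)-regular. Colour the vertices of the
   first copy of G by f and those of the second copy by f followed by the
   matching of K^-_{2d+2}. The vertical edges see the two ends of a matching
   edge, the horizontal ones see adjacent colours of K^-_{2d+2}, and local
   injectivity of f survives, so this colouring with 2d+2 colours is injective
   on closed neighbourhoods. Then colouring each incidence (v, vw) by the
   colour of w is an incidence colouring. *)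

Set Implicit Arguments.
Unset Strict Implicit.
Unset Printing Implicit Defensive.

Section IncidenceColoring.
Variables (T : finType) (e : rel T).
Hypotheses (e_sym : symmetric e) (e_irr : irreflexive e).

Lemma inc_adj_cases (v w u x : T) :
  inc_adj (v, w) (u, x) -> [\/ v = u, u = w | x = v].
Proof.
case/or4P => [/eqP | /eqP vw_ux | /eqP vu_vw | /eqP vu_ux].
- by constructor 1.
- have : u \in [set v; w] by rewrite vw_ux set21.
  by case/set2P => ->; [constructor 1 | constructor 2].
- have : u \in [set v; w] by rewrite -vu_vw set22.
  by case/set2P => ->; [constructor 1 | constructor 2].
- have : v \in [set u; x] by rewrite -vu_ux set21.
  by case/set2P => ->; [constructor 1 | constructor 3].
Qed.

Lemma inc_colorable_head (k : nat) (phi : T -> 'I_k) :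
  (forall a b, e a b -> phi a != phi b) -> locally_injective e phi ->
  inc_colorable e k.
Proof.
move=> phi_proper phi_li; apply/existsP; exists [ffun p => phi p.2].
apply/forallP => -[v w]; apply/forallP => -[u x]; apply/implyP; rewrite !ffunE.
case/and4P=> pq evw eux /inc_adj_cases[vu | uw | xv]; subst => /=.
- have := phi_li u w x; rewrite !inE => /(_ evw eux) phi_inj.
  by apply: contra_neq pq => /phi_inj ->.
- exact: phi_proper.
- by rewrite eq_sym phi_proper.
Qed.

Lemma incidence_coloring_degree (k : nat) (c : T * T -> 'I_k) (z y : T) :
  is_incidence_coloring e c -> e z y -> #|nbhd e z| < k.
Proof.
move=> /forallP c_col ezy.
set S := (y, z) |: [set (z, w) | w in nbhd e z].
have yz_notin : (y, z) \notin [set (z, w) | w in nbhd e z].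
  by apply/imsetP => -[w _ [yz _]]; rewrite yz e_irr in ezy.
have cardS : #|S| = #|nbhd e z|.+1.
  by rewrite cardsU1 yz_notin card_imset // => a b [].
have S_inc p : p \in S -> is_incidence e p.
  case/setU1P => [-> | /imsetP[w]]; first by rewrite /is_incidence /= e_sym.
  by rewrite inE => ezw ->.
have S_adj p q : p \in S -> q \in S -> inc_adj p q.
  by do 2![case/setU1P => [-> | /imsetP[? _ ->]]];
    rewrite /= ?eqxx ?orbT // [[set y; z]]setUC eqxx !orbT.
have c_inj : {in S &, injective c}.
  move=> p q pS qS cpq; apply/eqP; apply: contraT => pq.
  move/forallP: (c_col p) => /(_ q); rewrite pq !S_inc ?S_adj //=.
  by rewrite cpq eqxx.
rewrite -ltnS -cardS -(card_in_imset c_inj).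
by apply: leq_trans (max_card _) _; rewrite card_ord.
Qed.

Lemma inc_chi_le (k : nat) : inc_colorable e k -> inc_chi e <= k.
Proof. by rewrite /inc_chi; case: ex_minnP => m _; apply. Qed.

Lemma max_degree_lt_inc_chi (z y : T) : e z y -> max_degree e < inc_chi e.
Proof.
move=> ezy; rewrite /inc_chi /max_degree.
case: ex_minnP => k /existsP[c c_col] _.
have [|v ->] := @eq_bigmax _ (fun v => #|nbhd e v|).
  by apply/card_gt0P; exists z.
have z_lt := incidence_coloring_degree c_col ezy.
have [-> | [w]] := set_0Vmem (nbhd e v).
  by rewrite cards0 (leq_ltn_trans _ z_lt).
by rewrite inE => /(incidence_coloring_degree c_col).
Qed.
End IncidenceColoring.

Section Cartesian.
Variables (T U : finType) (e1 : rel T) (e2 : rel U).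

Lemma cartesian_sym :
  symmetric e1 -> symmetric e2 -> symmetric (cartesian e1 e2).
Proof.
by move=> e1_sym e2_sym [a b] [a' b']; rewrite /cartesian /= e1_sym e2_sym
  (eq_sym a) (eq_sym b).
Qed.

Lemma cartesian_irr :
  irreflexive e1 -> irreflexive e2 -> irreflexive (cartesian e1 e2).
Proof.
by move=> e1_irr e2_irr [a b]; rewrite /cartesian /= e1_irr e2_irr !andbF.
Qed.

Lemma nbhd_cartesian (a : T) (b : U) :
  nbhd (cartesian e1 e2) (a, b) =
  setX (nbhd e1 a) [set b] :|: setX [set a] (nbhd e2 b).
Proof.
by apply/setP => -[a' b']; rewrite !inE /cartesian /= !(eq_sym _ a) (eq_sym b').
Qed.

Lemma regular_cartesian (k1 k2 : nat) : irreflexive e2 ->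
  regular e1 k1 -> regular e2 k2 -> regular (cartesian e1 e2) (k1 + k2).
Proof.
move=> e2_irr e1_reg e2_reg [a b].
rewrite nbhd_cartesian cardsU !cardsX !cards1 e1_reg e2_reg muln1 mul1n.
suff -> : setX (nbhd e1 a) [set b] :&: setX [set a] (nbhd e2 b) = set0.
  by rewrite cards0 subn0.
apply/setP => -[a' b']; rewrite !inE /=.
by case: (b' =P b) => [-> | _]; rewrite ?e2_irr ?andbF.
Qed.
End Cartesian.

Lemma K2_sym : symmetric K2.
Proof. by move=> a b; rewrite /K2 eq_sym. Qed.

Lemma K2_irr : irreflexive K2.
Proof. by move=> b; rewrite /K2 eqxx. Qed.

Lemma regular_K2 : regular K2 1.
Proof.
move=> b; rewrite -(cards1 (~~ b)); apply: eq_card => c.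
by rewrite !inE /K2; case: b; case: c.
Qed.

Lemma max_degree_regular (T : finType) (e : rel T) (k : nat) :
  0 < #|T| -> regular e k -> max_degree e = k.
Proof.
move=> T_gt0 e_reg; rewrite /max_degree.
by have [v ->] := eq_bigmax (fun v => #|nbhd e v|) T_gt0.
Qed.

Section Partner.
Variable n : nat.

Fact partner_subproof (i : 'I_(2 * n)) : ~~ odd i + (i./2).*2 < 2 * n.
Proof.
have : i./2 < n by rewrite ltn_half_double -mul2n.
by case: (odd i) => /=; lia.
Qed.

(* The vertex matched to [i] in the perfect matching removed from [Kminus n]. *)
Definition partner (i : 'I_(2 * n)) : 'I_(2 * n) :=
  Ordinal (partner_subproof i).

Lemma half_partner (i : 'I_(2 * n)) : (partner i)./2 = i./2.
Proof. exact: half_bit_double. Qed.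

Lemma odd_partner (i : 'I_(2 * n)) : odd (partner i) = ~~ odd i.
Proof. by rewrite /= oddD odd_double addbF oddb. Qed.

Lemma partnerK : involutive partner.
Proof.
move=> i; apply: val_inj.
by rewrite [LHS]/= odd_partner negbK half_partner odd_double_half.
Qed.

Lemma Kminus_half (i j : 'I_(2 * n)) : Kminus n i j -> i./2 != j./2.
Proof. by case/andP. Qed.
End Partner.
Arguments partner {n}.

Section PrismColoring.
Variables (T : finType) (e : rel T) (n : nat) (f : T -> 'I_(2 * n)).

Definition prism_coloring (p : T * bool) : 'I_(2 * n) :=
  if p.2 then partner (f p.1) else f p.1.

Lemma half_prism_coloring (v : T) (b : bool) :
  (prism_coloring (v, b))./2 = (f v)./2.
Proof. by rewrite /prism_coloring; case: b; rewrite ?half_partner. Qed.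

Lemma odd_prism_coloring (v : T) (b : bool) :
  odd (prism_coloring (v, b)) = odd (f v) (+) b.
Proof.
by rewrite /prism_coloring; case: b; rewrite ?odd_partner ?addbT ?addbF.
Qed.

Lemma prism_coloring_fiber_inj (v : T) :
  injective (fun b => prism_coloring (v, b)).
Proof.
move=> b c /(congr1 (fun i : 'I_(2 * n) => odd i)).
by rewrite !odd_prism_coloring => /addbI.
Qed.

Lemma prism_coloring_layer_inj (b : bool) (v w : T) :
  prism_coloring (v, b) = prism_coloring (w, b) -> f v = f w.
Proof.
by rewrite /prism_coloring; case: b => //= /(congr1 partner); rewrite !partnerK.
Qed.

Lemma prism_coloring_half_eq (v w : T) (b c : bool) :
  prism_coloring (v, b) = prism_coloring (w, c) -> (f v)./2 = (f w)./2.
Proof.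
by move/(congr1 (fun i : 'I_(2 * n) => i./2)); rewrite !half_prism_coloring.
Qed.

Hypotheses (f_hom : is_hom e (Kminus n) f) (f_li : locally_injective e f).

Lemma prism_coloring_proper (p q : T * bool) :
  cartesian e K2 p q -> prism_coloring p != prism_coloring q.
Proof.
case: p q => [v b] [w c]; rewrite /cartesian /K2 /=.
case/orP => [/andP[evw /eqP <-] | /andP[/eqP <- bc]].
- by apply: contra_neq (Kminus_half (f_hom evw)) => /prism_coloring_half_eq.
- by apply: contra_neq bc => /prism_coloring_fiber_inj.
Qed.

Lemma prism_coloring_locally_injective :
  locally_injective (cartesian e K2) prism_coloring.
Proof.
move=> [v b] [w c] [w' c']; rewrite !inE /cartesian /K2 /=.
case/orP => [/andP[evw /eqP <-] | /andP[/eqP <- bc]];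
  case/orP => [/andP[evw' /eqP <-] | /andP[/eqP <- bc']] eq_col.
- by rewrite (@f_li v w w') ?inE // (prism_coloring_layer_inj eq_col).
- case/negP: (Kminus_half (f_hom evw)).
  by rewrite (prism_coloring_half_eq eq_col).
- case/negP: (Kminus_half (f_hom evw')).
  by rewrite (prism_coloring_half_eq eq_col).
- by move: bc bc' eq_col; case: b c c' => [] [] [].
Qed.
End PrismColoring.

Theorem mainTheorem7 (T : finType) (e : rel T)
  (e_sym : symmetric e) (e_irr : irreflexive e)
  (hG : two_permutable e) :
  inc_chi (cartesian e K2) = max_degree (cartesian e K2) + 1.
Proof.
case: hG => d [e_reg [[T_gt0 _] [f [f_hom f_li]]]].
have [v _] := card_gt0P T_gt0.
set E := cartesian e K2.
have E_sym : symmetric E := cartesian_sym e_sym K2_sym.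
have E_irr : irreflexive E := cartesian_irr e_irr K2_irr.
have deg_E : max_degree E = 2 * d + 1.
  apply: max_degree_regular.
    by rewrite card_prod muln_gt0 T_gt0 card_bool.
  exact: regular_cartesian K2_irr e_reg regular_K2.
have colorable : inc_colorable E (2 * (d + 1)).
  exact: inc_colorable_head (prism_coloring_proper f_hom)
    (prism_coloring_locally_injective f_hom f_li).
have evtrue : E (v, false) (v, true) by rewrite /E /cartesian /K2 eqxx orbT.
have := max_degree_lt_inc_chi E_sym E_irr evtrue.
have := inc_chi_le colorable.
rewrite deg_E; lia.
Qed.
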